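(* Let $F\in\mathbb{R}[x]$, $\delta\in\mathbb{R}$, and $Q=F\circ x^2\circ(x-\delta)$, with $n=\deg Q\ge6$. 1) If $Ch_2(Q)=Ch_3(Q)=0$, then either $\delta=0$ or $(2\delta)^2=\dfrac{3}{(n-1)(n-2)}$. 2) If $Ch_2(Q)=Ch_4(Q)=Ch_5(Q)=0$, then either $\delta=0$ or $t=2\delta$ satisfies $$\frac{2}{15}(n-1)(n-2)(n-3)(n-4)t^4-(n-2)(n-3)t^2+1=0.$$
   Context: $T_k$ denotes the Chebyshev polynomial of the first kind of degree $k$, $T_k(\cos\phi)=\cos(k\phi)$. Every real polynomial $Q$ of degree $n$ can be uniquely written as $Q=\sum_{k=0}^n d_kT_k$ with $d_k\in\mathbb{R}$; set $Ch_i(Q)=d_{n-i}$ for $0\le i\le n$. $\circ$ denotes composition, so $Q(x)=F((x-\delta)^2)$. *)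

From HB Require Import structures.
From mathcomp Require Import all_boot all_order all_algebra.
Set Implicit Arguments. Unset Strict Implicit. Unset Printing Implicit Defensive.
Import Order.TTheory GRing.Theory Num.Theory.
Local Open Scope ring_scope.

Section Cheb.
Variable R : realFieldType.

(* cheb_pair k = (T_k, T_{k+1}) *)
Fixpoint cheb_pair (k : nat) : {poly R} * {poly R} :=
  match k with
  | 0%N => (1, 'X)
  | k'.+1 => let: (a, b) := cheb_pair k' in (b, 2%:R *: 'X * b - a)
  end.

Definition cheb (k : nat) : {poly R} := (cheb_pair k).1.

(* Coefficient of T_k in the (unique) Chebyshev expansion of p, computed by
   the standard greedy algorithm: peel off the leading term with T_deg. *)
Fixpoint cheb_coef_fuel (fuel : nat) (p : {poly R}) (k : nat) : R :=
  match fuel with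
  | 0%N => 0
  | f.+1 =>
      let m := (size p).-1 in
      let c := lead_coef p / lead_coef (cheb m) in
      if k == m then c else cheb_coef_fuel f (p - c *: cheb m) k
  end.

Definition cheb_coef (p : {poly R}) (k : nat) : R := cheb_coef_fuel (size p) p k.

(* Ch_i(Q) = d_{n-i} where n = deg Q and Q = sum_k d_k T_k *)
Definition Ch (i : nat) (Q : {poly R}) : R := cheb_coef Q ((size Q).-1 - i).
End Cheb.

From Pilot Require Import Defs.
From HB Require Import structures.
From mathcomp Require Import all_boot all_order all_algebra.
From mathcomp Require Import ring zify.
Import Order.TTheory GRing.Theory Num.Theory.
Local Open Scope ring_scope.
Set Implicit Arguments. Unset Strict Implicit.

(* With G := F \Po 'X^2 we have Q = G \Po ('X - delta), and G is even of
   degree n.  By Taylor expansion the top coefficients Q_n, ..., Q_(n-5) are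
   polynomials in delta, g_n, g_(n-2), g_(n-4).  On the other side, since
   T_j = 2^(j-1) (x^j - j/4 x^(j-2) + j(j-3)/32 x^(j-4) - ...) has the parity
   of j, each vanishing Chebyshev coefficient Ch_i(Q) is a linear relation
   among Q_n, ..., Q_(n-5).  Eliminating g_(n-2) and g_(n-4) from these
   relations leaves delta * g_n * P(2 delta) = 0 with g_n <> 0. *)

Section TopCoefficients.
Variable R : nzRingType.

Lemma coef_sum_top (P : nat -> {poly R}) (a : nat -> R) n k :
  (forall j, (size (P j) <= j.+1)%N) -> (k <= n)%N ->
  (\sum_(j < n.+1) a j *: P j)`_(n - k) =
    \sum_(i < k.+1) a (n - i)%N * (P (n - i)%N)`_(n - k).
Proof.
move=> sP kn; rewrite coef_sum -(big_mkord xpredT (fun j => (a j *: P j)`_(n - k))).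
rewrite (big_cat_nat (n := n - k)) ?leq0n ?(leq_trans (leq_subr k n)) //=.
rewrite big1_seq ?add0r => [|j]; last first.
  rewrite mem_index_iota => /andP[_ jnk]; rewrite coefZ.
  by rewrite (leq_sizeP _ _ (sP j)) ?mulr0.
rewrite big_rev_mkord (_ : (n.+1 - (n - k) = k.+1)%N); last by lia.
by apply: eq_bigr => i _; rewrite subSS coefZ.
Qed.

Lemma coef_XsubC_exp (c : R) m j :
  (('X - c%:P) ^+ m)`_j = (- c) ^+ (m - j) *+ 'C(m, j).
Proof.
elim: m j => [|m IH] [|j]; rewrite ?expr0 ?coefC ?mulr0n //.
  by rewrite exprS mulrBl coefB coefCM coefXM /= IH !bin0 !subn0 !mulr1n exprS sub0r mulNr.
rewrite exprS mulrBl coefB coefCM coefXM /= !IH binS mulrnDr addrC subSS.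
congr (_ + _); have [jm|mj] := ltnP j m; first by rewrite -mulNr mulrnAr -exprS subnSK.
by rewrite bin_small ?ltnS // !mulr0n mulr0 oppr0.
Qed.

Lemma coef_comp_XsubC_top (G : {poly R}) c n k : size G = n.+1 -> (k <= n)%N ->
  (G \Po ('X - c%:P))`_(n - k) =
    \sum_(i < k.+1) G`_(n - i) * ((- c) ^+ (k - i) * 'C(n - i, k - i)%:R).
Proof.
move=> sG kn; rewrite comp_polyE sG coef_sum_top //; last first.
  by move=> j; rewrite size_exp_XsubC.
apply: eq_bigr => i _; have ik := ltn_ord i.
rewrite coef_XsubC_exp mulr_natr (_ : (n - k = n - i - (k - i))%N); last by lia.
by rewrite bin_sub ?subKn ?leq_sub2r //; lia.
Qed.

End TopCoefficients.

Lemma nat_ind2 (P : nat -> Prop) :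
  P 0%N -> P 1%N -> (forall k, P k -> P k.+1 -> P k.+2) -> forall k, P k.
Proof.
move=> P0 P1 PS k; suff: P k /\ P k.+1 by case.
by elim: k => [|k [Pk Pk1]]; split => //; apply: PS.
Qed.

Section Chebyshev.
Variable R : realFieldType.
Local Notation cheb := (@cheb R).

Lemma chebSS k : cheb k.+2 = 2%:R *: 'X * cheb k.+1 - cheb k.
Proof. by rewrite /Defs.cheb /=; case: (cheb_pair R k). Qed.

Lemma coef0_chebSS k : (cheb k.+2)`_0 = - (cheb k)`_0.
Proof. by rewrite chebSS coefB -scalerAl coefZ coefXM /= mulr0 sub0r. Qed.

Lemma coefS_chebSS k i :
  (cheb k.+2)`_i.+1 = 2%:R * (cheb k.+1)`_i - (cheb k)`_i.+1.
Proof. by rewrite chebSS coefB -scalerAl coefZ coefXM. Qed.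

Lemma coef_cheb_odd j i : odd (j + i) -> (cheb j)`_i = 0.
Proof.
elim/nat_ind2: j i => [||k IHk IHk1] [|i] //; rewrite ?coefC ?coefX; try by [case: i | move=> _].
- rewrite !addSn /= negbK => odd_k.
  by rewrite coef0_chebSS IHk ?oppr0.
- rewrite !addSn addnS /= !negbK => odd_ki.
  by rewrite coefS_chebSS IHk ?IHk1 ?addnS ?mulr0 ?subr0.
Qed.

Lemma coef_cheb_gt j i : (j < i)%N -> (cheb j)`_i = 0.
Proof.
elim/nat_ind2: j i => [||k IHk IHk1] [|i] //=; rewrite ?coefC ?coefX; try by case: i.
by move=> ki; rewrite coefS_chebSS IHk ?IHk1 ?mulr0 ?subr0 //; lia.
Qed.

Lemma coef_cheb_lead j : (cheb j.+1)`_j.+1 = 2%:R ^+ j.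
Proof.
elim: j => [|j IH]; first by rewrite coefX.
by rewrite coefS_chebSS IH coef_cheb_gt // subr0 exprS.
Qed.

Lemma coef_cheb_lead_neq0 j : (cheb j)`_j != 0.
Proof.
case: j => [|j]; first by rewrite coefC oner_eq0.
by rewrite coef_cheb_lead expf_neq0 // pnatr_eq0.
Qed.

Lemma size_cheb j : size (cheb j) = j.+1.
Proof.
apply/eqP; rewrite eqn_leq; apply/andP; split.
  by apply/leq_sizeP => i; apply: coef_cheb_gt.
by rewrite ltnNge; apply: contra (coef_cheb_lead_neq0 j) => /leq_sizeP ->.
Qed.

Lemma coef_cheb_sub2 j : (cheb j.+2)`_j = - (j.+2)%:R / 4%:R * 2%:R ^+ j.+1.
Proof.
elim: j => [|j IH]; first by rewrite coef0_chebSS coefC /=; field.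
by rewrite coefS_chebSS IH coef_cheb_lead !exprS -natr1; field.
Qed.

Lemma coef_cheb_sub4 j :
  (cheb j.+4)`_j = (j.+4)%:R * (j.+1)%:R / 32%:R * 2%:R ^+ j.+3.
Proof.
elim: j => [|j IH]; first by rewrite !coef0_chebSS coefC /=; field.
by rewrite coefS_chebSS IH coef_cheb_sub2 !exprS -!natr1; field.
Qed.

(* Coefficient of x^(j-g) in T_j divided by that of x^j; only meaningful
   for g <= 5. *)
Definition cheb_lower_ratio (j g : nat) : R :=
  match g with
  | 0 => 1
  | 2 => - (j%:R / 4%:R)
  | 4 => j%:R * (j%:R - 3%:R) / 32%:R
  | _ => 0
  end.

Lemma coef_cheb_lower j g : (g <= 5)%N -> (g <= j)%N ->
  (cheb j)`_(j - g) = (cheb j)`_j * cheb_lower_ratio j g.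
Proof.
move=> g5 gj; have [odd_g|even_g] := boolP (odd g).
  rewrite coef_cheb_odd ?oddD ?oddB // ?addbA ?addbb //.
  by case: g g5 odd_g {gj} => [|[|[|[|[|[|]]]]]]; rewrite ?mulr0.
case: g g5 gj even_g => [|[|[|[|[|[|g]]]]]] // _ gj _; rewrite ?subn0 ?mulr1 //=.
- case: j gj => [|[|j]] // _; rewrite !subSS subn0 coef_cheb_sub2 coef_cheb_lead.
  by rewrite exprS; field.
- case: j gj => [|[|[|[|j]]]] // _; rewrite !subSS subn0 coef_cheb_sub4 coef_cheb_lead.
  by rewrite -(addn3 j.+1) natrD addrK; field.
Qed.

Definition cheb_sum (d : nat -> R) (N : nat) : {poly R} :=
  \sum_(j < N) d j *: cheb j.

Lemma cheb_sumS d N : cheb_sum d N.+1 = cheb_sum d N + d N *: cheb N.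
Proof. by rewrite /cheb_sum big_ord_recr. Qed.

Lemma eq_cheb_sum d e N : (forall j, (j < N)%N -> d j = e j) ->
  cheb_sum d N = cheb_sum e N.
Proof. by move=> de; apply: eq_bigr => j _; rewrite de. Qed.

Lemma cheb_sumB d e N :
  cheb_sum (fun j => d j - e j) N = cheb_sum d N - cheb_sum e N.
Proof. by rewrite /cheb_sum -sumrB; apply: eq_bigr => j _; rewrite scalerBl. Qed.

Lemma coef_cheb_sum_ge d N i : (N <= i)%N -> (cheb_sum d N)`_i = 0.
Proof.
move=> Ni; rewrite coef_sum big1 // => j _.
by rewrite coefZ coef_cheb_gt ?mulr0 // (leq_trans _ Ni).
Qed.

Lemma size_cheb_sum d N : (size (cheb_sum d N) <= N)%N.
Proof. exact/leq_sizeP/coef_cheb_sum_ge. Qed.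

Lemma cheb_sum_widen d N M : (N <= M)%N -> (forall j, (N <= j)%N -> d j = 0) ->
  cheb_sum d M = cheb_sum d N.
Proof.
move=> NM dN; rewrite [RHS](big_ord_widen M (fun j => d j *: cheb j) NM) big_mkcond.
by apply: eq_bigr => j _; case: ltnP => // /dN ->; rewrite scale0r.
Qed.

Lemma cheb_sum_eq0 d N : (forall j, (N <= j)%N -> d j = 0) ->
  cheb_sum d N = 0 -> forall j, d j = 0.
Proof.
elim: N => [|N IH] dN sum0; first by move=> j; apply: dN.
have dN0 : d N = 0.
  have /eqP := congr1 (fun p : {poly R} => p`_N) sum0.
  rewrite cheb_sumS coefD coefZ coef_cheb_sum_ge // add0r coef0 mulf_eq0.
  by rewrite (negbTE (coef_cheb_lead_neq0 N)) orbF => /eqP.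
apply: IH => [j|]; first by rewrite leq_eqVlt => /predU1P[<-//|/dN].
by rewrite -sum0 cheb_sumS dN0 scale0r addr0.
Qed.

Lemma cheb_sum_exists (p : {poly R}) N : (size p <= N)%N ->
  exists2 d, (forall j, (N <= j)%N -> d j = 0) & p = cheb_sum d N.
Proof.
elim: N p => [|N IH] p sp.
  by exists (fun=> 0) => //; rewrite /cheb_sum big_ord0; apply/size_poly_leq0P.
pose c := p`_N / (cheb N)`_N.
have /IH[d dN pE] : (size (p - c *: cheb N)%R <= N)%N.
  apply/leq_sizeP => j Nj; rewrite coefB coefZ.
  move: Nj; rewrite leq_eqVlt => /predU1P[<-|Nj].
    by rewrite /c divfK ?coef_cheb_lead_neq0 ?subrr.
  by rewrite coef_cheb_gt // mulr0 subr0; apply: (leq_sizeP _ _ sp).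
exists (fun j => if j == N then c else d j).
  by move=> j Nj; rewrite ifN ?dN ?(ltnW Nj) // gtn_eqF.
rewrite cheb_sumS eqxx -[X in X = _](subrK (c *: cheb N)) pE.
by congr (_ + _); apply: eq_cheb_sum => j jN; rewrite ltn_eqF.
Qed.

Lemma cheb_sum_support d N j : (forall i, (N <= i)%N -> d i = 0) ->
  (size (cheb_sum d N) <= j)%N -> d j = 0.
Proof.
move=> dN sj; have [/dN//|jN] := leqP N j.
have [e ej dE] := cheb_sum_exists sj.
have eN i : (N <= i)%N -> e i = 0 by move=> Ni; rewrite ej // (leq_trans (ltnW jN)).
have /cheb_sum_eq0/(_ j) : cheb_sum (fun i => d i - e i) N = 0.
  by rewrite cheb_sumB dE (cheb_sum_widen (ltnW jN) ej) subrr.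
by rewrite ej // subr0; apply => i Ni; rewrite dN ?eN ?subr0.
Qed.

Lemma cheb_coef_fuel_sum fuel d N k : (forall j, (N <= j)%N -> d j = 0) ->
  (size (cheb_sum d N) <= fuel)%N -> cheb_coef_fuel fuel (cheb_sum d N) k = d k.
Proof.
elim: fuel d N => [|f IH] d N dN sf.
  by rewrite /= (cheb_sum_support dN (leq_trans sf (leq0n k))).
set p := cheb_sum d N; set M := (size p).-1.
have dM j : (M < j)%N -> d j = 0.
  by move=> Mj; apply: (cheb_sum_support dN); rewrite -/p /M; lia.
have pE : p = cheb_sum d M + d M *: cheb M.
  rewrite -cheb_sumS /p -(cheb_sum_widen (leq_maxl N M.+1) dN).
  exact: cheb_sum_widen (leq_maxr N M.+1) dM.
have lead_p : lead_coef p = d M * lead_coef (cheb M).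
  by rewrite !lead_coefE size_cheb -/M {1}pE coefD coefZ coef_cheb_sum_ge ?add0r.
rewrite /= -/p -/M lead_p mulfK ?lead_coef_eq0 -?size_poly_gt0 ?size_cheb //.
have [->//|kM] := eqVneq k M.
rewrite pE addrK (eq_cheb_sum (e := fun j => if j == M then 0 else d j)) => [|j jM].
  rewrite IH ?(negbTE kM) // => [j Mj|].
    by case: eqVneq => [//|jM]; apply: dM; rewrite ltn_neqAle eq_sym jM.
  by apply: leq_trans (size_cheb_sum _ _) _; rewrite /M /p; lia.
by rewrite ltn_eqF.
Qed.

Lemma cheb_coef_sum d N k : (forall j, (N <= j)%N -> d j = 0) ->
  cheb_coef (cheb_sum d N) k = d k.
Proof. by move=> dN; apply: cheb_coef_fuel_sum. Qed.

Lemma cheb_expansion (p : {poly R}) : p = cheb_sum (cheb_coef p) (size p).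
Proof.
have [d dN pE] := cheb_sum_exists (leqnn (size p)).
have cE j : cheb_coef p j = d j by rewrite {1}pE cheb_coef_sum.
by rewrite {1}pE; apply: eq_cheb_sum => j _; rewrite cE.
Qed.

Lemma coef_Ch_top (Q : {poly R}) n k : size Q = n.+1 -> (k <= n)%N -> (k <= 5)%N ->
  Q`_(n - k) = \sum_(i < k.+1)
    Ch i Q * ((cheb (n - i))`_(n - i) * cheb_lower_ratio (n - i) (k - i)).
Proof.
move=> sQ kn k5; rewrite {1}(cheb_expansion Q) sQ coef_sum_top //; last first.
  by move=> j; rewrite size_cheb.
apply: eq_bigr => i _; have ik := ltn_ord i.
rewrite /Ch sQ -coef_cheb_lower; [|lia|lia].
by congr (_ * (cheb _)`_ _); lia.
Qed.

Lemma Ch2_eq0_coef (Q : {poly R}) n : size Q = n.+1 -> (2 <= n)%N -> Ch 2 Q = 0 ->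
  Q`_(n - 2) = - (n%:R / 4%:R) * Q`_n.
Proof.
move=> sQ n2 C2; rewrite -[in RHS](subn0 n) !(coef_Ch_top sQ) //.
by rewrite !big_ord_recr !big_ord0 /= C2 !subn0; field.
Qed.

Lemma Ch3_eq0_coef (Q : {poly R}) n : size Q = n.+1 -> (3 <= n)%N -> Ch 3 Q = 0 ->
  Q`_(n - 3) = - ((n%:R - 1) / 4%:R) * Q`_(n - 1).
Proof.
move=> sQ n3 C3; rewrite !(coef_Ch_top sQ) ?(leq_trans _ n3) //.
by rewrite !big_ord_recr !big_ord0 /= C3 natrB ?(leq_trans _ n3) //; field.
Qed.

Lemma Ch24_eq0_coef (Q : {poly R}) n :
  size Q = n.+1 -> (4 <= n)%N -> Ch 2 Q = 0 -> Ch 4 Q = 0 ->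
  Q`_(n - 4) = n%:R * (n%:R - 3%:R) / 32%:R * Q`_n.
Proof.
move=> sQ n4 C2 C4; rewrite -[in RHS](subn0 n) !(coef_Ch_top sQ) //.
by rewrite !big_ord_recr !big_ord0 /= C2 C4 !subn0; field.
Qed.

Lemma Ch5_eq0_coef (Q : {poly R}) n : size Q = n.+1 -> (5 <= n)%N -> Ch 5 Q = 0 ->
  Q`_(n - 5) = - ((n%:R - 3%:R) / 4%:R * Q`_(n - 3)
                  + (n%:R - 1) * (n%:R - 2%:R) / 32%:R * Q`_(n - 1)).
Proof.
move=> sQ n5 C5; rewrite !(coef_Ch_top sQ) ?(leq_trans _ n5) //.
by rewrite !big_ord_recr !big_ord0 /= C5 !natrB ?(leq_trans _ n5) //; field.
Qed.

End Chebyshev.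

Lemma natr_binS (R : numFieldType) m k :
  'C(m, k.+1)%:R = 'C(m, k)%:R * (m%:R - k%:R) / k.+1%:R :> R.
Proof.
apply: (mulIf (x := k.+1%:R)); first by rewrite pnatr_eq0.
rewrite divfK ?pnatr_eq0 // -natrM mulnC mul_bin_left.
have [km|mk] := leqP k m; first by rewrite natrM natrB // mulrC.
by rewrite bin_small // muln0 mul0r.
Qed.

Section EvenShift.
Variable R : realFieldType.
Variables (G Q : {poly R}) (delta : R) (n : nat).
Hypotheses (QG : Q = G \Po ('X - delta%:P)) (sG : size G = n.+1).
Hypothesis G_even : forall j, odd j -> G`_j = 0.

Lemma coef_top_neq0 : G`_n != 0.
Proof. by rewrite -[n]/(n.+1.-1) -sG -lead_coefE lead_coef_eq0 -size_poly_gt0 sG. Qed.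

Lemma coef_sub_odd_eq0 i : odd i -> (i <= n)%N -> G`_(n - i) = 0.
Proof.
move=> odd_i i_n; apply: G_even; rewrite oddB // odd_i addbT.
by apply: contra coef_top_neq0 => /G_even ->.
Qed.

Lemma coef_shift_top : Q`_n = G`_n.
Proof.
by rewrite QG -[in LHS](subn0 n) coef_comp_XsubC_top // big_ord1 subn0 bin0 expr0 !mulr1.
Qed.

Lemma shift_even_rel23 : (3 <= n)%N ->
  Q`_(n - 2) = - (n%:R / 4%:R) * Q`_n ->
  Q`_(n - 3) = - ((n%:R - 1) / 4%:R) * Q`_(n - 1) ->
  delta = 0 \/ (2%:R * delta) ^+ 2 = 3%:R / ((n%:R - 1) * (n%:R - 2%:R)).
Proof.
move=> n3 R2 R3.
(* The multiplier of the second bracket eliminates G`_(n - 2). *)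
have key : delta * (G`_n * ((2%:R * delta) ^+ 2 - 3%:R / ((n%:R - 1) * (n%:R - 2%:R))))
    = 12%:R / (n%:R * (n%:R - 1) * (n%:R - 2%:R)) *
      (Q`_(n - 3) + (n%:R - 1) / 4%:R * Q`_(n - 1)
       + delta * (n%:R - 2%:R) * (Q`_(n - 2) + n%:R / 4%:R * Q`_n)).
  rewrite coef_shift_top QG !coef_comp_XsubC_top ?(leq_trans _ n3) //.
  rewrite !big_ord_recr !big_ord0 /= !subn0.
  rewrite (coef_sub_odd_eq0 (i := 1)) ?(coef_sub_odd_eq0 (i := 3)) ?(leq_trans _ n3) //.
  rewrite !natr_binS !bin0 !natrB ?(leq_trans _ n3) //.
  by field; rewrite !subr_eq0 pnatr_eq1 eqr_nat pnatr_eq0; lia.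
rewrite R2 R3 !mulNr !addNr mulr0 addr0 mulr0 in key.
move/eqP: key; rewrite !mulf_eq0 (negbTE coef_top_neq0) /= subr_eq0.
by case/orP => /eqP; [left | right].
Qed.

Lemma shift_even_rel245 : (5 <= n)%N ->
  Q`_(n - 2) = - (n%:R / 4%:R) * Q`_n ->
  Q`_(n - 4) = n%:R * (n%:R - 3%:R) / 32%:R * Q`_n ->
  Q`_(n - 5) = - ((n%:R - 3%:R) / 4%:R * Q`_(n - 3)
                  + (n%:R - 1) * (n%:R - 2%:R) / 32%:R * Q`_(n - 1)) ->
  delta = 0 \/
    let t := 2%:R * delta in
    2%:R / 15%:R * (n%:R - 1) * (n%:R - 2%:R) * (n%:R - 3%:R) * (n%:R - 4%:R) * t ^+ 4
      - (n%:R - 2%:R) * (n%:R - 3%:R) * t ^+ 2 + 1 = 0.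
Proof.
move=> n5 R2 R4 R5.
(* The multipliers delta (n - 4) and K eliminate G`_(n - 4), then G`_(n - 2). *)
pose K := delta * (n%:R - 2%:R) * (n%:R - 3%:R)
          * (delta ^+ 2 * (n%:R - 4%:R) / 3%:R - 4%:R^-1).
have key : delta * (G`_n * (2%:R / 15%:R * (n%:R - 1) * (n%:R - 2%:R) * (n%:R - 3%:R)
                   * (n%:R - 4%:R) * (2%:R * delta) ^+ 4
                   - (n%:R - 2%:R) * (n%:R - 3%:R) * (2%:R * delta) ^+ 2 + 1))
    = - (16%:R / n%:R) *
      (Q`_(n - 5) + ((n%:R - 3%:R) / 4%:R * Q`_(n - 3)
                     + (n%:R - 1) * (n%:R - 2%:R) / 32%:R * Q`_(n - 1))
       + delta * (n%:R - 4%:R) * (Q`_(n - 4) - n%:R * (n%:R - 3%:R) / 32%:R * Q`_n)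
       - K * (Q`_(n - 2) + n%:R / 4%:R * Q`_n)).
  rewrite /K coef_shift_top QG !coef_comp_XsubC_top ?(leq_trans _ n5) //.
  rewrite !big_ord_recr !big_ord0 /= !subn0 (coef_sub_odd_eq0 (i := 1))
    ?(coef_sub_odd_eq0 (i := 3)) ?(coef_sub_odd_eq0 (i := 5)) ?(leq_trans _ n5) //.
  rewrite !natr_binS !bin0 !natrB ?(leq_trans _ n5) //.
  by field; rewrite pnatr_eq0; lia.
rewrite R2 R4 R5 !mulNr !addNr subrr !mulr0 add0r subr0 mulr0 oppr0 in key.
move/eqP: key; rewrite !mulf_eq0 (negbTE coef_top_neq0) /=.
by case/orP => /eqP; [left | right].
Qed.

End EvenShift.

Theorem lemma3p4 (R : realFieldType) (F : {poly R}) (delta : R) (n : nat) :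
  let Q := F \Po (('X - delta%:P) ^+ 2) in
  (size Q).-1 = n -> (6 <= n)%N ->
  ((Ch 2 Q = 0 -> Ch 3 Q = 0 ->
      delta = 0 \/
      (2%:R * delta) ^+ 2 = 3%:R / ((n%:R - 1) * (n%:R - 2%:R))) /\
   (Ch 2 Q = 0 -> Ch 4 Q = 0 -> Ch 5 Q = 0 ->
      delta = 0 \/
      let t := 2%:R * delta in
      2%:R / 15%:R * (n%:R - 1) * (n%:R - 2%:R) * (n%:R - 3%:R) * (n%:R - 4%:R) * t ^+ 4
        - (n%:R - 2%:R) * (n%:R - 3%:R) * t ^+ 2 + 1 = 0)).
Proof.
move=> Q sQ n6; set G := F \Po 'X^2.
have QG : Q = G \Po ('X - delta%:P) by rewrite /Q /G -comp_Xn_poly comp_polyA.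
have sizeQ : size Q = n.+1 by lia.
have sG : size G = n.+1 by rewrite -sizeQ QG (size_comp_poly2 G (size_XsubC delta)).
have G_even j : odd j -> G`_j = 0.
  by move=> odd_j; rewrite coef_comp_poly_Xn // dvdn2 odd_j.
split=> [C2 C3 | C2 C4 C5].
- apply: (shift_even_rel23 QG sG G_even); first exact: leq_trans n6.
  + exact: Ch2_eq0_coef sizeQ (leq_trans _ n6) C2.
  + exact: Ch3_eq0_coef sizeQ (leq_trans _ n6) C3.
- apply: (shift_even_rel245 QG sG G_even); first exact: leq_trans n6.
  + exact: Ch2_eq0_coef sizeQ (leq_trans _ n6) C2.
  + exact: Ch24_eq0_coef sizeQ (leq_trans _ n6) C2 C4.
  + exact: Ch5_eq0_coef sizeQ (leq_trans _ n6) C5.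
Qed.
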